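(* Let $SC\subset[0,1]^2$ be the Sierpiński carpet. Then $S(SC)=\{(0,0)\}$. Consequently, $SC$ is not the achievement set $E(v_n)$ of any sequence $(v_n)$ in $\mathbb R^2$ with $\sum_n v_n$ absolutely convergent.
   Context: The Sierpiński carpet is the set of points $(s,t)\in[0,1]^2$ admitting ternary expansions $s=\sum_{i\ge1}a_i3^{-i}$, $t=\sum_{i\ge1}b_i3^{-i}$ ($a_i,b_i\in\{0,1,2\}$) with no index $i$ such that $a_i=b_i=1$; equivalently, it is obtained from $[0,1]^2$ by dividing into nine congruent subsquares, removing the open middle one, and iterating on the remaining squares. For an absolutely convergent series $\sum_n v_n$ in $\mathbb R^2$, $E(v_n)=\{\sum_{n=1}^\infty \varepsilon_n v_n : (\varepsilon_n)\in\{0,1\}^{\mathbb N}\}$. For $A\subset\mathbb R^2$, the spectre of $A$ is $S(A)=\{x\in \mathbb R^2:\ \forall y\in A,\ y+x\in A\text{ or }y-x\in A\}$. *)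

From Stdlib Require Import Reals.
Open Scope R_scope.

Definition pt := (R * R)%type.

Definition padd (p q : pt) : pt := (fst p + fst q, snd p + snd q).
Definition psub (p q : pt) : pt := (fst p - fst q, snd p - snd q).

Definition pnorm (p : pt) : R := sqrt (fst p ^ 2 + snd p ^ 2).

(* Sierpinski carpet: points (s,t) with ternary expansions
   s = sum_{i>=1} a_i 3^{-i}, t = sum_{i>=1} b_i 3^{-i}, digits in {0,1,2},
   and no index i with a_i = b_i = 1.  (Index shifted: digit a i has weight 3^{-(i+1)}.) *)
Definition sierpinski_carpet (p : pt) : Prop :=
  exists a b : nat -> nat,
    (forall i, (a i <= 2)%nat /\ (b i <= 2)%nat) /\
    (forall i, ~ (a i = 1%nat /\ b i = 1%nat)) /\
    infinite_sum (fun i => INR (a i) / 3 ^ (S i)) (fst p) /\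
    infinite_sum (fun i => INR (b i) / 3 ^ (S i)) (snd p).

Definition abs_convergent (v : nat -> pt) : Prop :=
  exists l : R, infinite_sum (fun n => pnorm (v n)) l.

Definition achievement_set (v : nat -> pt) (p : pt) : Prop :=
  exists eps : nat -> bool,
    infinite_sum (fun n => if eps n then fst (v n) else 0) (fst p) /\
    infinite_sum (fun n => if eps n then snd (v n) else 0) (snd p).

Definition spectre (A : pt -> Prop) (x : pt) : Prop :=
  forall y, A y -> A (padd y x) \/ A (psub y x).

(* The open squares removed at level k have side 3^-k.  For 0 < u <= 1, scaling
   by 3^k puts u into (1/6, 1/2]; then a carpet point y can be chosen so that y + (u,0)
   lies in a removed square of level k and y - (u,0) leaves [0,1]^2.  So the spectre
   contains no nonzero horizontal vector, and by the symmetry (s,t) <-> (t,s) no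
   nonzero vertical one.  Testing the corners (0,0) and (1,0) puts every element of
   the spectre on an axis, hence the spectre is {0}.
   Changing one epsilon_n turns a subsum into its translate by +v_n or -v_n, so every
   term v_n lies in the spectre of the achievement set; a sequence whose achievement
   set is the carpet would therefore vanish, and its achievement set would be {0}. *)

From Stdlib Require Import Reals Lra Lia.
From Coquelicot Require Import Coquelicot.
Open Scope R_scope.

Lemma is_series_ext_eq (a b : nat -> R) (l l' : R) :
  (forall n, a n = b n) -> l = l' -> is_series a l -> is_series b l'.
Proof. intros Hab <-. exact (is_series_ext a b l Hab). Qed.

Lemma is_series_zero : is_series (fun _ : nat => 0) 0.
Proof.
  assert (Hq : Rabs (/ 2) < 1) by (rewrite Rabs_pos_eq; lra).
  pose proof (is_series_scal_r 0 _ _ (is_series_geom _ Hq)) as H.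
  rewrite Rmult_0_r in H.
  exact (is_series_ext _ _ _ (fun n => Rmult_0_r _) H).
Qed.

Lemma is_series_delta (n : nat) (c : R) :
  is_series (fun m => if Nat.eqb m n then c else 0) c.
Proof.
  revert c; induction n as [|n IH]; intros c; apply is_series_decr_1.
  - simpl. apply (is_series_ext (fun _ => 0)); [intros; reflexivity|].
    unfold plus, opp; simpl. rewrite Rplus_opp_r. exact is_series_zero.
  - unfold plus, opp; simpl. rewrite Ropp_0, Rplus_0_r. apply IH.
Qed.

Lemma is_series_le (a b : nat -> R) (la lb : R) :
  (forall n, a n <= b n) -> is_series a la -> is_series b lb -> la <= lb.
Proof.
  intros Hab Ha Hb. apply is_series_Reals in Ha, Hb.
  exact (Rle_cv_lim (fun n => sum_Rle a b n (fun i _ => Hab i)) Ha Hb).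
Qed.

Definition ternary (a : nat -> nat) (s : R) : Prop :=
  is_series (fun i => INR (a i) / 3 ^ S i) s.

Lemma ternary_tail a s : ternary a s -> ternary (fun i => a (S i)) (3 * s - INR (a 0%nat)).
Proof.
  intros H.
  assert (Htail : is_series (fun i => INR (a (S i)) / 3 ^ S (S i)) (s - INR (a 0%nat) / 3)).
  { apply (@is_series_incr_1 R_AbsRing R_NormedModule (fun i => INR (a i) / 3 ^ S i)).
    unfold plus; simpl. replace (s - INR (a 0%nat) / 3 + INR (a 0%nat) / (3 * 1)) with s
      by field.
    exact H. }
  apply (is_series_scal_l 3) in Htail.
  refine (is_series_ext_eq _ _ _ _ _ _ Htail).
  - intros i. unfold scal; simpl; unfold mult; simpl. field. apply pow_nonzero. lra.
  - unfold scal; simpl; unfold mult; simpl. field.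
Qed.

Definition prepend (d : nat) (a : nat -> nat) (i : nat) : nat :=
  match i with O => d | S j => a j end.

Lemma ternary_prepend d a s : ternary a s -> ternary (prepend d a) ((INR d + s) / 3).
Proof.
  intros H. apply (is_series_scal_l (/ 3)) in H.
  apply (@is_series_decr_1 R_AbsRing R_NormedModule).
  refine (is_series_ext_eq _ _ _ _ _ _ H).
  - intros i. unfold scal; simpl; unfold mult; simpl. field. apply pow_nonzero. lra.
  - unfold scal, plus, opp; simpl; unfold mult; simpl. field.
Qed.

Lemma ternary_const c : ternary (fun _ => c) (INR c / 2).
Proof.
  assert (Hq : Rabs (/ 3) < 1) by (rewrite Rabs_pos_eq; lra).
  pose proof (is_series_scal_r (INR c / 3) _ _ (is_series_geom _ Hq)) as H.
  refine (is_series_ext_eq _ _ _ _ _ _ H).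
  - intros i. rewrite pow_inv. simpl. field. apply pow_nonzero. lra.
  - field.
Qed.

Lemma ternary_nonneg a s : ternary a s -> 0 <= s.
Proof.
  apply (is_series_le (fun _ => 0) _ _ _); [intros i | exact is_series_zero].
  apply Rdiv_le_0_compat; [apply pos_INR | apply pow_lt; lra].
Qed.

Lemma ternary_le_1 a s : (forall i, (a i <= 2)%nat) -> ternary a s -> s <= 1.
Proof.
  intros Ha H. replace 1 with (INR 2 / 2) by (simpl; field).
  apply (is_series_le (fun i => INR (a i) / 3 ^ S i) (fun i => INR 2 / 3 ^ S i));
    [intros i | exact H | exact (ternary_const 2)].
  apply Rmult_le_compat_r.
  - left. apply Rinv_0_lt_compat, pow_lt. lra.
  - apply le_INR, Ha.
Qed.

Lemma ternary_head_bounds a s : (forall i, (a i <= 2)%nat) -> ternary a s ->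
  INR (a 0%nat) <= 3 * s <= INR (a 0%nat) + 1.
Proof.
  intros Ha H. pose proof (ternary_tail _ _ H) as Ht.
  pose proof (ternary_nonneg _ _ Ht).
  pose proof (ternary_le_1 _ _ (fun i => Ha (S i)) Ht).
  lra.
Qed.

Lemma ternary_drop_zeros k a s : (forall i, (a i <= 2)%nat) -> ternary a s ->
  3 ^ k * s < 1 -> ternary (fun i => a (k + i)%nat) (3 ^ k * s).
Proof.
  revert a s; induction k as [|k IH]; intros a s Ha H Hs.
  - refine (is_series_ext_eq _ _ _ _ _ _ H); [reflexivity | simpl; ring].
  - pose proof (ternary_nonneg _ _ H).
    pose proof (pow_R1_Rle 3 k ltac:(lra)).
    simpl in Hs.
    assert (Ha0 : a 0%nat = 0%nat).
    { pose proof (ternary_head_bounds _ _ Ha H).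
      destruct (a 0%nat) as [|d]; [reflexivity|].
      rewrite S_INR in *. pose proof (pos_INR d). nra. }
    pose proof (ternary_tail _ _ H) as Ht. rewrite Ha0 in Ht.
    specialize (IH _ _ (fun i => Ha (S i)) Ht ltac:(simpl; nra)).
    refine (is_series_ext_eq _ _ _ _ _ _ IH); [reflexivity | simpl; ring].
Qed.

Lemma ternary_middle_third a s : (forall i, (a i <= 2)%nat) -> ternary a s ->
  1 / 3 < s < 2 / 3 -> a 0%nat = 1%nat.
Proof.
  intros Ha H Hs. pose proof (ternary_head_bounds _ _ Ha H).
  destruct (a 0%nat) as [|[|d]]; [simpl in *; lra | reflexivity |].
  rewrite !S_INR in *. pose proof (pos_INR d). lra.
Qed.

Definition pad (k : nat) (a : nat -> nat) : nat -> nat := Nat.iter k (prepend 0) a.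

Lemma ternary_pad k a s : ternary a s -> ternary (pad k a) (s / 3 ^ k).
Proof.
  intros H. induction k as [|k IH]; simpl.
  - refine (is_series_ext_eq _ _ _ _ _ _ H); [reflexivity | field].
  - refine (is_series_ext_eq _ _ _ _ _ _ (ternary_prepend 0 _ _ IH)); [reflexivity|].
    simpl. field. apply pow_nonzero. lra.
Qed.

Lemma pad_pairwise (P : nat -> nat -> Prop) k a b : P 0%nat 0%nat ->
  (forall i, P (a i) (b i)) -> forall i, P (pad k a i) (pad k b i).
Proof.
  intros P0 Hab. induction k as [|k IH]; intros i; [apply Hab|].
  destruct i as [|i]; [exact P0 | apply IH].
Qed.

Lemma sierpinski_carpet_ternary s t : sierpinski_carpet (s, t) <->
  exists a b : nat -> nat,
    (forall i, (a i <= 2)%nat /\ (b i <= 2)%nat) /\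
    (forall i, ~ (a i = 1%nat /\ b i = 1%nat)) /\ ternary a s /\ ternary b t.
Proof.
  unfold sierpinski_carpet, ternary; simpl.
  split; intros (a & b & Hd & Hn & Ha & Hb); exists a, b;
    (split; [exact Hd | split; [exact Hn | split; apply is_series_Reals; assumption]]).
Qed.

Lemma sierpinski_carpet_bounds s t : sierpinski_carpet (s, t) -> 0 <= s <= 1 /\ 0 <= t <= 1.
Proof.
  intros (a & b & Hd & _ & Ha & Hb)%sierpinski_carpet_ternary.
  repeat split.
  - exact (ternary_nonneg _ _ Ha).
  - exact (ternary_le_1 _ _ (fun i => proj1 (Hd i)) Ha).
  - exact (ternary_nonneg _ _ Hb).
  - exact (ternary_le_1 _ _ (fun i => proj2 (Hd i)) Hb).
Qed.

Lemma sierpinski_carpet_swap s t : sierpinski_carpet (s, t) -> sierpinski_carpet (t, s).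
Proof.
  intros (a & b & Hd & Hn & Ha & Hb)%sierpinski_carpet_ternary.
  apply sierpinski_carpet_ternary. exists b, a.
  repeat split; auto; try apply Hd. intros i [H1 H2]. exact (Hn i (conj H2 H1)).
Qed.

Lemma sierpinski_carpet_scale k s t :
  sierpinski_carpet (s, t) -> sierpinski_carpet (s / 3 ^ k, t / 3 ^ k).
Proof.
  intros (a & b & Hd & Hn & Ha & Hb)%sierpinski_carpet_ternary.
  apply sierpinski_carpet_ternary. exists (pad k a), (pad k b).
  split; [|split; [|split; apply ternary_pad; assumption]].
  - apply (pad_pairwise (fun x y => (x <= 2)%nat /\ (y <= 2)%nat)); [lia | apply Hd].
  - apply (pad_pairwise (fun x y => ~ (x = 1%nat /\ y = 1%nat))); [lia | apply Hn].
Qed.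

Lemma sierpinski_carpet_hole k s t : sierpinski_carpet (s, t) ->
  1 / 3 < 3 ^ k * s < 2 / 3 -> 1 / 3 < 3 ^ k * t < 2 / 3 -> False.
Proof.
  intros (a & b & Hd & Hn & Ha & Hb)%sierpinski_carpet_ternary Hs Ht.
  assert (Ha2 : forall i, (a i <= 2)%nat) by apply Hd.
  assert (Hb2 : forall i, (b i <= 2)%nat) by apply Hd.
  apply (Hn k). split.
  - rewrite <- (Nat.add_0_r k).
    apply (ternary_middle_third (fun i => a (k + i)%nat) (3 ^ k * s)); auto.
    apply ternary_drop_zeros; auto. lra.
  - rewrite <- (Nat.add_0_r k).
    apply (ternary_middle_third (fun i => b (k + i)%nat) (3 ^ k * t)); auto.
    apply ternary_drop_zeros; auto. lra.
Qed.

Lemma pow3_window u : 0 < u <= 1 / 2 -> exists k, 1 / 6 < 3 ^ k * u <= 1 / 2.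
Proof.
  intros Hu.
  assert (Hwin : forall N u, (/ 3) ^ N < 6 * u -> u <= 1 / 2 ->
                 exists k, 1 / 6 < 3 ^ k * u <= 1 / 2).
  { clear u Hu. intros N; induction N as [|N IH]; intros u HN Hu.
    all: destruct (Rlt_le_dec (1 / 6) u) as [Hbig|Hsmall]; [exists 0%nat; simpl; lra|].
    - simpl in HN. lra.
    - destruct (IH (3 * u)) as [k Hk]; [simpl in HN; lra | lra |].
      exists (S k). simpl. rewrite Rmult_assoc, (Rmult_comm (3 ^ k)), <- Rmult_assoc.
      lra. }
  destruct (pow_lt_1_zero (/ 3) ltac:(rewrite Rabs_pos_eq; lra) (6 * u) ltac:(lra))
    as [N HN].
  specialize (HN N (le_n N)). rewrite Rabs_pos_eq in HN by (apply pow_le; lra).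
  exact (Hwin N u HN (proj2 Hu)).
Qed.

Lemma sierpinski_carpet_digits a b s t :
  (forall i, (a i <= 2)%nat /\ (b i <= 2)%nat) ->
  (forall i, ~ (a i = 1%nat /\ b i = 1%nat)) ->
  ternary a s -> ternary b t -> sierpinski_carpet (s, t).
Proof. intros Hd Hn Ha Hb. apply sierpinski_carpet_ternary. exists a, b; auto. Qed.

Lemma sierpinski_carpet_const (c d : nat) : (c <= 2)%nat -> (d <= 2)%nat ->
  ~ (c = 1%nat /\ d = 1%nat) ->
  sierpinski_carpet (INR c / 2, INR d / 2).
Proof.
  intros Hc Hd H1. apply (sierpinski_carpet_digits (fun _ => c) (fun _ => d));
    [intros; lia | intros; exact H1 | apply ternary_const | apply ternary_const].
Qed.

Lemma sierpinski_carpet_1_6 : sierpinski_carpet (1 / 6, 5 / 9).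
Proof.
  apply (sierpinski_carpet_digits (prepend 0 (fun _ => 1%nat))
                                  (prepend 1 (prepend 2 (fun _ => 0%nat)))).
  - intros [|[|i]]; simpl; lia.
  - intros [|[|i]]; simpl; lia.
  - refine (is_series_ext_eq _ _ _ _ _ _ (ternary_prepend 0 _ _ (ternary_const 1)));
      [reflexivity | simpl; field].
  - refine (is_series_ext_eq _ _ _ _ _ _
      (ternary_prepend 1 _ _ (ternary_prepend 2 _ _ (ternary_const 0))));
      [reflexivity | simpl; field].
Qed.

Lemma sierpinski_carpet_1_9 : sierpinski_carpet (1 / 9, 5 / 9).
Proof.
  apply (sierpinski_carpet_digits (prepend 0 (prepend 1 (fun _ => 0%nat)))
                                  (prepend 1 (prepend 2 (fun _ => 0%nat)))).
  - intros [|[|i]]; simpl; lia.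
  - intros [|[|i]]; simpl; lia.
  - refine (is_series_ext_eq _ _ _ _ _ _
      (ternary_prepend 0 _ _ (ternary_prepend 1 _ _ (ternary_const 0))));
      [reflexivity | simpl; field].
  - refine (is_series_ext_eq _ _ _ _ _ _
      (ternary_prepend 1 _ _ (ternary_prepend 2 _ _ (ternary_const 0))));
      [reflexivity | simpl; field].
Qed.

Definition horizontal_escape (u : R) : Prop :=
  exists s t, sierpinski_carpet (s, t) /\
    ~ sierpinski_carpet (s + u, t) /\ ~ sierpinski_carpet (s - u, t).

Lemma horizontal_escape_scaled k s u : sierpinski_carpet (s, 5 / 9) ->
  s < 3 ^ k * u -> 1 / 3 < s + 3 ^ k * u < 2 / 3 -> horizontal_escape u.
Proof.
  intros Hc Hlt Hmid. pose proof (pow_lt 3 k ltac:(lra)) as Hk.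
  exists (s / 3 ^ k), (5 / 9 / 3 ^ k). split; [|split].
  - exact (sierpinski_carpet_scale k _ _ Hc).
  - intros Hc'. apply (sierpinski_carpet_hole k _ _ Hc').
    + replace (3 ^ k * (s / 3 ^ k + u)) with (s + 3 ^ k * u) by (field; lra). lra.
    + replace (3 ^ k * (5 / 9 / 3 ^ k)) with (5 / 9) by (field; lra). lra.
  - intros (Hs & _)%sierpinski_carpet_bounds.
    assert (s / 3 ^ k < u).
    { apply (Rmult_lt_reg_l (3 ^ k)); [exact Hk|].
      replace (3 ^ k * (s / 3 ^ k)) with s by (field; lra). exact Hlt. }
    lra.
Qed.

Lemma horizontal_escape_of_pos u : 0 < u <= 1 -> horizontal_escape u.
Proof.
  intros Hu. destruct (Rlt_le_dec (1 / 2) u) as [Hbig|Hsmall].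
  - exists (INR 1 / 2), (INR 0 / 2). split; [|split].
    + apply sierpinski_carpet_const; lia.
    + intros (Hs & _)%sierpinski_carpet_bounds. simpl in Hs. lra.
    + intros (Hs & _)%sierpinski_carpet_bounds. simpl in Hs. lra.
  - destruct (pow3_window u ltac:(lra)) as [k Hk].
    destruct (Rle_lt_dec (3 ^ k * u) (1 / 3)).
    + apply (horizontal_escape_scaled k (1 / 6)); [exact sierpinski_carpet_1_6 | lra | lra].
    + apply (horizontal_escape_scaled k (1 / 9)); [exact sierpinski_carpet_1_9 | lra | lra].
Qed.

Lemma spectre_swap u w :
  spectre sierpinski_carpet (u, w) -> spectre sierpinski_carpet (w, u).
Proof.
  intros Hx [s t] Hy. apply sierpinski_carpet_swap in Hy.
  destruct (Hx _ Hy) as [H | H]; [left | right]; apply sierpinski_carpet_swap; exact H.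
Qed.

Lemma spectre_opp (A : pt -> Prop) u w : spectre A (u, w) -> spectre A (- u, - w).
Proof.
  intros Hx y Hy. destruct (Hx y Hy) as [H | H]; [right | left].
  - replace (psub y (- u, - w)) with (padd y (u, w))
      by (unfold padd, psub; f_equal; simpl; ring).
    exact H.
  - exact H.
Qed.

Lemma spectre_horizontal_pos u : 0 < u <= 1 -> ~ spectre sierpinski_carpet (u, 0).
Proof.
  intros Hu Hx.
  destruct (horizontal_escape_of_pos u Hu) as (s & t & Hc & Hplus & Hminus).
  destruct (Hx _ Hc) as [H | H]; unfold padd, psub in H; simpl in H.
  - rewrite Rplus_0_r in H. exact (Hplus H).
  - rewrite Rminus_0_r in H. exact (Hminus H).
Qed.

Lemma spectre_horizontal u : -1 <= u <= 1 -> spectre sierpinski_carpet (u, 0) -> u = 0.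
Proof.
  intros Hu Hx.
  destruct (Rtotal_order u 0) as [Hneg | [Hzero | Hpos]]; [exfalso | exact Hzero | exfalso].
  - apply (spectre_horizontal_pos (- u)); [lra|].
    rewrite <- Ropp_0. exact (spectre_opp _ _ _ Hx).
  - exact (spectre_horizontal_pos u ltac:(lra) Hx).
Qed.

Lemma spectre_sierpinski_carpet x : spectre sierpinski_carpet x -> x = (0, 0).
Proof.
  destruct x as [u w]. intros Hx.
  assert (Hcorner : forall c, (c <= 2)%nat -> sierpinski_carpet (INR c / 2, INR 0 / 2)).
  { intros c Hc. apply sierpinski_carpet_const; lia. }
  assert (Hsign : (0 <= u <= 1 /\ 0 <= w <= 1) \/ (-1 <= u <= 0 /\ -1 <= w <= 0)).
  { destruct (Hx _ (Hcorner 0%nat ltac:(lia))) as [H | H];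
      apply sierpinski_carpet_bounds in H; simpl in H; [left | right]; lra. }
  assert (Hopp : (u <= 0 /\ 0 <= w) \/ (0 <= u /\ w <= 0)).
  { destruct (Hx _ (Hcorner 2%nat ltac:(lia))) as [H | H];
      apply sierpinski_carpet_bounds in H; simpl in H; [left | right]; lra. }
  assert (Haxis : u = 0 \/ w = 0) by lra.
  destruct Haxis as [-> | ->].
  - apply spectre_swap in Hx. rewrite (spectre_horizontal w); [reflexivity | lra | exact Hx].
  - rewrite (spectre_horizontal u); [reflexivity | lra | exact Hx].
Qed.

Lemma infinite_sum_change_one (a g : nat -> R) (l : R) (n : nat) : infinite_sum a l ->
  (forall m, m <> n -> g m = a m) -> infinite_sum g (l + (g n - a n)).
Proof.
  intros H Hga. apply is_series_Reals. apply is_series_Reals in H.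
  pose proof (is_series_plus _ _ _ _ H (is_series_delta n (g n - a n))) as Hsum.
  refine (is_series_ext_eq _ _ _ _ _ _ Hsum); [|reflexivity].
  intros m. unfold plus; simpl.
  destruct (Nat.eqb_spec m n) as [-> | Hmn]; [ring | rewrite Hga by exact Hmn; ring].
Qed.

Lemma achievement_set_spectre v n : spectre (achievement_set v) (v n).
Proof.
  intros y (eps & H1 & H2).
  set (eps' m := if Nat.eqb m n then negb (eps n) else eps m).
  assert (Heps' : forall m, m <> n -> eps' m = eps m).
  { intros m Hmn. unfold eps'. destruct (Nat.eqb_spec m n); [contradiction | reflexivity]. }
  assert (Heps'n : eps' n = negb (eps n)) by (unfold eps'; rewrite Nat.eqb_refl; reflexivity).
  assert (Hflip : forall (f : pt -> R) l,
    infinite_sum (fun m => if eps m then f (v m) else 0) l ->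
    infinite_sum (fun m => if eps' m then f (v m) else 0)
                 (l + (if eps n then - f (v n) else f (v n)))).
  { intros f l H.
    pose proof (infinite_sum_change_one _ (fun m => if eps' m then f (v m) else 0) _ n H)
      as Hc.
    cbv beta in Hc. rewrite Heps'n in Hc.
    destruct (eps n); simpl in Hc |- *.
    - replace (l + - f (v n)) with (l + (0 - f (v n))) by ring.
      apply Hc. intros m Hmn. rewrite (Heps' m Hmn). reflexivity.
    - replace (l + f (v n)) with (l + (f (v n) - 0)) by ring.
      apply Hc. intros m Hmn. rewrite (Heps' m Hmn). reflexivity. }
  pose proof (Hflip fst _ H1) as Hfst. pose proof (Hflip snd _ H2) as Hsnd.
  destruct (eps n); [right | left]; exists eps'; split; assumption.
Qed.

Lemma spectre_ext (A B : pt -> Prop) x : (forall p, A p <-> B p) -> spectre A x -> spectre B x.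
Proof.
  intros HAB Hx y Hy. destruct (Hx y (proj2 (HAB y) Hy)) as [H | H];
    [left | right]; apply HAB; exact H.
Qed.

Lemma achievement_set_zero v p : (forall n, v n = (0, 0)) -> achievement_set v p -> p = (0, 0).
Proof.
  intros Hv (eps & H1 & H2).
  assert (Hz : forall f : pt -> R, f (0, 0) = 0 -> forall l,
    infinite_sum (fun m => if eps m then f (v m) else 0) l -> l = 0).
  { intros f Hf l H. apply is_series_Reals, is_series_unique in H.
    rewrite <- H. apply is_series_unique.
    refine (is_series_ext_eq _ _ _ _ _ _ is_series_zero); [|reflexivity].
    intros m. rewrite Hv, Hf. destruct (eps m); reflexivity. }
  destruct p as [s t]. simpl in H1, H2.
  rewrite (Hz fst eq_refl _ H1), (Hz snd eq_refl _ H2). reflexivity.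
Qed.

Theorem mainTheorem19 :
  (forall x : pt, spectre sierpinski_carpet x <-> x = (0, 0)) /\
  ~ (exists v : nat -> pt,
       abs_convergent v /\
       forall p : pt, achievement_set v p <-> sierpinski_carpet p).
Proof.
  split.
  - intros x; split; [apply spectre_sierpinski_carpet|].
    intros -> [s t] Hy. left. unfold padd; simpl. rewrite !Rplus_0_r. exact Hy.
  - intros (v & _ & Hv).
    assert (Hzero : forall n, v n = (0, 0)).
    { intros n. apply spectre_sierpinski_carpet.
      exact (spectre_ext _ _ _ Hv (achievement_set_spectre v n)). }
    assert (Hhalf : sierpinski_carpet (INR 1 / 2, INR 0 / 2))
      by (apply sierpinski_carpet_const; lia).
    apply Hv, (achievement_set_zero v _ Hzero) in Hhalf.
    injection Hhalf. simpl. lra.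
Qed.
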